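(* Let $h:[0,\infty)\to[0,\infty)$ satisfy $h(0)=0$ and be concave, and suppose that either $h(t)/t\not\to\infty$ as $t\to0^+$, or $h(t)/t\not\to0$ as $t\to\infty$. Then there exists an infinite metric space $(X,d)$ such that $(X,h\circ d)$ admits an isometric embedding into the $2$-dimensional Euclidean space $\mathbb R^2$. *)

From Stdlib Require Import Reals List.
Open Scope R_scope.

Definition maps_nonneg (h : R -> R) : Prop :=
  forall t, 0 <= t -> 0 <= h t.

Definition concave_on_nonneg (h : R -> R) : Prop :=
  forall x y lam, 0 <= x -> 0 <= y -> 0 <= lam <= 1 ->
    lam * h x + (1 - lam) * h y <= h (lam * x + (1 - lam) * y).

Definition ratio_to_infty_at_0 (h : R -> R) : Prop :=
  forall M : R, exists delta, 0 < delta /\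
    forall t, 0 < t < delta -> M < h t / t.

Definition ratio_to_0_at_infty (h : R -> R) : Prop :=
  forall eps : R, 0 < eps -> exists T, forall t, T < t -> Rabs (h t / t) < eps.

Definition is_metric {X : Type} (d : X -> X -> R) : Prop :=
  (forall x y, 0 <= d x y) /\
  (forall x y, d x y = 0 <-> x = y) /\
  (forall x y, d x y = d y x) /\
  (forall x y z, d x z <= d x y + d y z).

Definition infinite_type (X : Type) : Prop :=
  forall l : list X, exists x, ~ In x l.

Definition dist2 (p q : R * R) : R :=
  sqrt ((fst p - fst q)^2 + (snd p - snd q)^2).

From Stdlib Require Import Reals List Lra Lia Psatz Ranalysis5 ClassicalEpsilon Classical.
Open Scope R_scope.

(* If h(t)/t stays bounded as t -> 0, then h is nearly linear at small scales, and if h(t)/t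
   stays away from 0 as t -> oo, it is nearly linear at large scales; with concavity this gives
   h(A + B) >= h(B) + (1 - eps) h(A) for 0 <= A <= B in that range of scales.  Take points
   p_n = r_n u_n in the plane whose unit directions u_n converge slowly and whose radii r_n grow
   (resp. shrink) so fast that all distances lie in the good range of scales and every angle of
   every triangle p_x p_y p_z stays away from pi.  By the law of cosines the side opposite p_y is
   then shorter than b + (1 - eps) a, where a <= b are the sides at p_y; so if h A = a and h B = b
   it is shorter than h (A + B), and d(x, y) := h^-1 |p_x - p_y| is a metric on nat with
   h o d = |p_x - p_y|. *)

Definition nondecreasing_on_nonneg (h : R -> R) : Prop :=
  forall u v, 0 <= u <= v -> h u <= h v.

Definition almost_superadditive (h : R -> R) (eps : R) (S : R -> Prop) : Prop :=
  forall A B, 0 <= A -> A <= B -> S (h A) -> S (h B) ->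
    h B + (1 - eps) * h A <= h (A + B).

Lemma antitone_sup_at_0 (g : R -> R) (M : R) :
  (forall s t, 0 < s <= t -> g t <= g s) -> (forall t, 0 < t -> g t <= M) ->
  exists c, (forall t, 0 < t -> g t <= c) /\
    forall eta, 0 < eta -> exists tau, 0 < tau /\ forall t, 0 < t <= tau -> c - eta < g t.
Proof.
  intros Hanti HM.
  destruct (completeness (fun y => exists t, 0 < t /\ y = g t)) as [c [Hub Hlub]].
  - exists M. intros y [t [Ht ->]]. auto.
  - exists (g 1), 1. split; [lra | reflexivity].
  - exists c. split; [intros t Ht; apply Hub; exists t; auto|].
    intros eta Heta.
    destruct (classic (exists t, 0 < t /\ c - eta < g t)) as [[t [Ht Hgt]] | Hnone].
    + exists t. split; [exact Ht|]. intros u Hu. pose proof (Hanti u t Hu). lra.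
    + assert (c <= c - eta); [|lra]. apply Hlub. intros y [t [Ht ->]].
      apply Rnot_lt_le. intros Hlt. apply Hnone. exists t. auto.
Qed.

Lemma antitone_inf_at_infty (g : R -> R) (m : R) :
  (forall s t, 0 < s <= t -> g t <= g s) -> (forall t, 0 < t -> m <= g t) ->
  exists L, (forall t, 0 < t -> L <= g t) /\
    forall eta, 0 < eta -> exists T, 0 < T /\ forall t, T <= t -> g t < L + eta.
Proof.
  intros Hanti Hm.
  destruct (completeness (fun y => exists t, 0 < t /\ y = - g t)) as [c [Hub Hlub]].
  - exists (- m). intros y [t [Ht ->]]. pose proof (Hm t Ht). lra.
  - exists (- g 1), 1. split; [lra | reflexivity].
  - exists (- c). split.
    + intros t Ht. assert (- g t <= c) by (apply Hub; exists t; auto). lra.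
    + intros eta Heta.
      destruct (classic (exists t, 0 < t /\ g t < - c + eta)) as [[t [Ht Hgt]] | Hnone].
      * exists t. split; [exact Ht|]. intros u Hu. pose proof (Hanti t u (conj Ht Hu)). lra.
      * assert (c <= c - eta); [|lra]. apply Hlub. intros y [t [Ht ->]].
        apply Rnot_lt_le. intros Hlt. apply Hnone. exists t. split; [exact Ht | lra].
Qed.

Section ConcaveProfile.

Variable h : R -> R.
Hypothesis h_nonneg : maps_nonneg h.
Hypothesis h0 : h 0 = 0.
Hypothesis h_concave : concave_on_nonneg h.

Lemma concave_chord u w x : 0 <= u < w -> u <= x <= w ->
  h u + (x - u) / (w - u) * (h w - h u) <= h x.
Proof.
  intros Hu Hx.
  set (lam := (x - u) / (w - u)).
  assert (Hlam : lam * (w - u) = x - u) by (unfold lam; field; lra).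
  assert (Hlam01 : 0 <= lam <= 1) by (split; nra).
  pose proof (h_concave w u lam ltac:(lra) ltac:(lra) Hlam01) as Hc.
  replace (lam * w + (1 - lam) * u) with x in Hc by nra.
  lra.
Qed.

Lemma concave_slope_antitone s t : 0 < s <= t -> h t / t <= h s / s.
Proof.
  intros Hst.
  pose proof (concave_chord 0 t s ltac:(lra) ltac:(lra)) as Hc.
  rewrite h0, !Rminus_0_r, Rplus_0_l in Hc.
  apply (Rmult_le_reg_r s); [lra|].
  replace (h s / s * s) with (h s) by (field; lra).
  replace (h t / t * s) with (s / t * h t) by (field; lra).
  exact Hc.
Qed.

Lemma concave_increment_ge L A B : (forall t, 0 <= t -> L * t <= h t) ->
  0 <= A -> 0 <= B -> L * A <= h (B + A) - h B.
Proof.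
  intros HL HA HB.
  destruct (Req_dec A 0) as [-> | HA0]; [rewrite Rplus_0_r; lra|].
  apply Rle_plus_epsilon. intros eps Heps.
  pose proof (HL B HB) as HLB.
  (* compare with the chord from [B] to [B + A + q], whose slope is at least [L - eps / A] *)
  set (q := A * (h B - L * B) / eps).
  assert (Hq : eps * q = A * (h B - L * B)) by (unfold q; field; lra).
  assert (Hq0 : 0 <= q).
  { apply (Rmult_le_reg_l eps); [lra|]. rewrite Hq, Rmult_0_r.
    apply Rmult_le_pos; lra. }
  pose proof (concave_chord B (B + A + q) (B + A) ltac:(lra) ltac:(lra)) as Hc.
  pose proof (HL (B + A + q) ltac:(lra)) as HLY.
  replace (B + A - B) with A in Hc by ring.
  replace (B + A + q - B) with (A + q) in Hc by ring.
  set (k := A / (A + q)) in Hc.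
  assert (Hk : k * (A + q) = A) by (unfold k; field; lra).
  assert (Hk0 : 0 <= k) by nra.
  assert (Hslope : k * (L * (B + A + q) - h B) <= k * (h (B + A + q) - h B)) by nra.
  assert (Herr : k * (h B - L * B) <= eps).
  { apply (Rmult_le_reg_r A); [lra|].
    replace (k * (h B - L * B) * A) with (k * (eps * q)) by (rewrite Hq; ring).
    replace (eps * A) with (eps * (k * (A + q))) by (rewrite Hk; reflexivity).
    assert (0 <= eps * (k * A)) by (apply Rmult_le_pos; [|apply Rmult_le_pos]; lra).
    nra. }
  assert (Hlin : k * (L * (B + A + q) - h B) = L * (k * (A + q)) - k * (h B - L * B)) by ring.
  rewrite Hk in Hlin. lra.
Qed.

Lemma concave_nondecreasing : nondecreasing_on_nonneg h.
Proof.
  intros x y Hxy.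
  assert (H : 0 * (y - x) <= h (x + (y - x)) - h x).
  { apply concave_increment_ge; [|lra|lra].
    intros t Ht. rewrite Rmult_0_l. apply h_nonneg, Ht. }
  replace (x + (y - x)) with y in H by ring. lra.
Qed.

Lemma concave_increment_le c u v : 0 < c <= u -> u <= v ->
  h v - h u <= (v - u) * (h c / c).
Proof.
  intros Hcu Huv.
  pose proof (concave_slope_antitone u v ltac:(lra)) as Huv'.
  pose proof (concave_slope_antitone c u Hcu) as Hcu'.
  set (a := h u / u) in *.
  assert (Ha : a * u = h u) by (unfold a; field; lra).
  assert (Hv : h v / v * v = h v) by (field; lra).
  nra.
Qed.

Lemma concave_continuous x : 0 < x -> continuity_pt h x.
Proof.
  intros Hx eps Heps.
  set (K := h (x / 2) / (x / 2)).
  assert (HK : 0 <= K) by (unfold K; pose proof (h_nonneg (x / 2) ltac:(lra));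
                           apply Rmult_le_pos; [lra | apply Rlt_le, Rinv_0_lt_compat; lra]).
  assert (Hlip : forall u v, x / 2 <= u <= v -> Rabs (h v - h u) <= K * (v - u)).
  { intros u v Huv.
    pose proof (concave_increment_le (x / 2) u v ltac:(lra) ltac:(lra)).
    pose proof (concave_nondecreasing u v ltac:(lra)).
    rewrite Rabs_right by lra. unfold K in *. lra. }
  exists (Rmin (x / 2) (eps / (K + 1))). split.
  { apply Rmin_glb_lt; [lra | apply Rdiv_lt_0_compat; lra]. }
  intros y [_ Hy]. simpl in *. unfold R_dist in *.
  pose proof (Rmin_l (x / 2) (eps / (K + 1))). pose proof (Rmin_r (x / 2) (eps / (K + 1))).
  assert (Hyx : (K + 1) * Rabs (y - x) < eps).
  { replace eps with ((K + 1) * (eps / (K + 1))) by (field; lra).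
    apply Rmult_lt_compat_l; lra. }
  assert (Hd : Rabs (h y - h x) <= K * Rabs (y - x)).
  { destruct (Rle_lt_dec x y).
    - rewrite (Rabs_right (y - x)) by lra. apply Hlip. lra.
    - rewrite Rabs_minus_sym, (Rabs_left (y - x)) by lra.
      replace (- (y - x)) with (x - y) by ring.
      apply Hlip. apply Rabs_def2 in Hy. lra. }
  pose proof (Rabs_pos (y - x)). nra.
Qed.

Lemma concave_attains lo hi s : 0 < lo <= hi -> h lo <= s <= h hi ->
  exists t, lo <= t <= hi /\ h t = s.
Proof.
  intros Hlh Hs.
  destruct (Req_dec (h lo) s) as [E | Nlo]; [exists lo; split; [lra | exact E]|].
  destruct (Req_dec (h hi) s) as [E | Nhi]; [exists hi; split; [lra | exact E]|].
  assert (lo < hi) by (destruct (Req_dec lo hi) as [-> |]; lra).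
  destruct (IVT_interv (fun t => h t - s) lo hi) as [t [Ht Hts]]; try lra.
  - intros a Ha. apply continuity_pt_minus.
    + apply concave_continuous. lra.
    + apply continuity_pt_const. intros ? ?. reflexivity.
  - exists t. split; [exact Ht | lra].
Qed.

Lemma slope_sup_at_0 : ~ ratio_to_infty_at_0 h -> 0 < h 1 ->
  exists c, 0 < c /\ (forall t, 0 < t -> h t <= c * t) /\
    forall eta, 0 < eta -> exists tau, 0 < tau /\
      forall t, 0 < t <= tau -> (c - eta) * t <= h t.
Proof.
  intros Hnot H1.
  apply not_all_ex_not in Hnot as [M HM].
  assert (Hbound : forall s, 0 < s -> h s / s <= M).
  { intros s Hs. apply Rnot_lt_le. intros Hlt. apply HM.
    exists s. split; [exact Hs|]. intros t Ht.
    pose proof (concave_slope_antitone t s ltac:(lra)). lra. }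
  destruct (antitone_sup_at_0 (fun t => h t / t) M concave_slope_antitone Hbound)
    as [c [Hc Hnear]].
  assert (Hdiv : forall t, 0 < t -> h t / t * t = h t) by (intros; field; lra).
  exists c. split; [|split].
  - pose proof (Hc 1 ltac:(lra)). rewrite Rdiv_1_r in *. lra.
  - intros t Ht. pose proof (Hc t Ht). pose proof (Hdiv t Ht). nra.
  - intros eta Heta. destruct (Hnear eta Heta) as [tau [Htau Hlow]].
    exists tau. split; [exact Htau|]. intros t Ht.
    pose proof (Hlow t Ht). pose proof (Hdiv t ltac:(lra)). nra.
Qed.

Lemma slope_inf_at_infty : ~ ratio_to_0_at_infty h ->
  exists L, 0 < L /\ (forall t, 0 <= t -> L * t <= h t) /\
    forall eta, 0 < eta -> exists T, forall t, T <= t -> h t <= (L + eta) * t.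
Proof.
  intros Hnot.
  apply not_all_ex_not in Hnot as [e0 He0].
  apply imply_to_and in He0 as [He0 HT].
  assert (Hbound : forall s, 0 < s -> e0 <= h s / s).
  { intros s Hs. apply Rnot_lt_le. intros Hlt. apply HT.
    exists s. intros t Ht.
    pose proof (concave_slope_antitone s t ltac:(lra)).
    assert (0 <= h t / t) by (apply Rmult_le_pos; [apply h_nonneg; lra |
                                                  apply Rlt_le, Rinv_0_lt_compat; lra]).
    rewrite Rabs_right; lra. }
  destruct (antitone_inf_at_infty (fun t => h t / t) e0 concave_slope_antitone Hbound)
    as [L [HL Hnear]].
  assert (Hdiv : forall t, 0 < t -> h t / t * t = h t) by (intros; field; lra).
  exists L. split; [|split].
  - destruct (Hnear (e0 / 2) ltac:(lra)) as [T [HT0 Hup]].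
    pose proof (Hup T (Rle_refl T)). pose proof (Hbound T HT0). lra.
  - intros t Ht. destruct (Req_dec t 0) as [-> | Ht0]; [rewrite h0; lra|].
    pose proof (HL t ltac:(lra)). pose proof (Hdiv t ltac:(lra)). nra.
  - intros eta Heta. destruct (Hnear eta Heta) as [T [HT0 Hup]].
    exists T. intros t Ht.
    pose proof (Hup t Ht). pose proof (Hdiv t ltac:(lra)). nra.
Qed.

Lemma almost_superadditive_near_0 : ~ ratio_to_infty_at_0 h -> 0 < h 1 ->
  forall eps, 0 < eps <= 1 / 2 ->
    exists beta, 0 < beta <= h 1 /\ almost_superadditive h eps (fun s => s < beta).
Proof.
  intros Hnot H1 eps Heps.
  destruct (slope_sup_at_0 Hnot H1) as [c [Hc [Hup Hnear]]].
  destruct (Hnear (eps * c / 2) ltac:(nra)) as [tau [Htau Hlow]].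
  set (m := Rmin tau 1).
  assert (Hm : 0 < m <= tau /\ m <= 1).
  { unfold m. split; [split|]; [apply Rmin_glb_lt; lra | apply Rmin_l | apply Rmin_r]. }
  exists (h (m / 2)). split; [split|].
  - pose proof (Hlow (m / 2) ltac:(lra)).
    assert (0 < c - eps * c / 2) by nra.
    assert (0 < (c - eps * c / 2) * (m / 2)) by (apply Rmult_lt_0_compat; lra). lra.
  - apply concave_nondecreasing. lra.
  - intros A B HA HAB _ HB.
    assert (HBm : B < m / 2).
    { apply Rnot_le_lt. intros Hle.
      pose proof (concave_nondecreasing (m / 2) B ltac:(lra)). lra. }
    destruct (Req_dec B 0) as [HB0 | HB0].
    { assert (A = 0) by lra. subst. rewrite Rplus_0_r, h0. lra. }
    (* over [B, 2 B] the chord of [h] has slope close to [c], since [h t] is close to [c t]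
       for small [t] *)
    pose proof (concave_chord B (2 * B) (A + B) ltac:(lra) ltac:(lra)) as Hchord.
    replace (A + B - B) with A in Hchord by ring.
    replace (2 * B - B) with B in Hchord by ring.
    pose proof (Hlow (2 * B) ltac:(lra)) as H2B.
    pose proof (Hup B ltac:(lra)) as HBup.
    assert (HAup : h A <= c * A).
    { destruct (Req_dec A 0) as [-> | HA0]; [rewrite h0; lra | apply Hup; lra]. }
    set (k := A / B) in Hchord.
    assert (Hk : k * B = A) by (unfold k; field; lra).
    assert (Hk0 : 0 <= k) by nra.
    assert (k * (h (2 * B) - h B) >= k * ((c - eps * c / 2) * (2 * B) - c * B)) by nra.
    assert (Hlin : k * ((c - eps * c / 2) * (2 * B) - c * B) = (1 - eps) * c * (k * B))
      by field.
    rewrite Hk in Hlin. nra.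
Qed.

Lemma almost_superadditive_near_infty : ~ ratio_to_0_at_infty h ->
  forall eps, 0 < eps <= 1 / 2 ->
    exists alpha, h 1 <= alpha /\ almost_superadditive h eps (fun s => alpha < s).
Proof.
  intros Hnot eps Heps.
  destruct (slope_inf_at_infty Hnot) as [L [HL [Hlow Hnear]]].
  destruct (Hnear (eps * L) ltac:(nra)) as [T HT].
  pose proof (Rmax_l T 1). pose proof (Rmax_r T 1).
  exists (h (Rmax T 1)). split; [apply concave_nondecreasing; lra|].
  intros A B HA HAB HhA _.
  assert (HAT : Rmax T 1 < A).
  { apply Rnot_le_lt. intros Hle.
    pose proof (concave_nondecreasing A (Rmax T 1) ltac:(lra)). lra. }
  pose proof (HT A ltac:(lra)) as HAup.
  pose proof (concave_increment_ge L A B Hlow HA ltac:(lra)) as Hinc.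
  assert ((1 - eps) * h A <= (1 - eps) * ((L + eps * L) * A))
    by (apply Rmult_le_compat_l; lra).
  assert (0 <= eps * eps * L * A) by (repeat apply Rmult_le_pos; lra).
  rewrite (Rplus_comm A B). nra.
Qed.

Lemma range_near_0 : ~ ratio_to_infty_at_0 h -> 0 < h 1 ->
  forall s, 0 < s <= h 1 -> exists t, 0 <= t /\ h t = s.
Proof.
  intros Hnot H1 s Hs.
  destruct (slope_sup_at_0 Hnot H1) as [c [Hc [Hup _]]].
  pose proof (Hup 1 ltac:(lra)).
  assert (Hlo : 0 < s / c) by (apply Rdiv_lt_0_compat; lra).
  assert (Hlo_le : h (s / c) <= s).
  { pose proof (Hup (s / c) Hlo). replace (c * (s / c)) with s in * by (field; lra). lra. }
  destruct (concave_attains (s / c) 1 s) as [t [Ht Hts]].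
  - split; [exact Hlo|]. apply (Rmult_le_reg_r c); [lra|].
    replace (s / c * c) with s by (field; lra). lra.
  - lra.
  - exists t. split; [lra | exact Hts].
Qed.

Lemma range_near_infty : ~ ratio_to_0_at_infty h ->
  forall s, h 1 <= s -> exists t, 0 <= t /\ h t = s.
Proof.
  intros Hnot s Hs.
  destruct (slope_inf_at_infty Hnot) as [L [HL [Hlow _]]].
  assert (Hq : 0 <= s / L).
  { pose proof (Hlow 1 ltac:(lra)). pose proof (h_nonneg 1 ltac:(lra)).
    apply Rmult_le_pos; [lra | apply Rlt_le, Rinv_0_lt_compat; lra]. }
  destruct (concave_attains 1 (s / L + 1) s) as [t [Ht Hts]].
  - lra.
  - split; [exact Hs|]. pose proof (Hlow (s / L + 1) ltac:(lra)).
    replace (L * (s / L + 1)) with (s + L) in * by (field; lra). lra.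
  - exists t. split; [lra | exact Hts].
Qed.

End ConcaveProfile.

Lemma dist2_sym p q : dist2 p q = dist2 q p.
Proof. unfold dist2. f_equal. ring. Qed.

Lemma dist2_refl p : dist2 p p = 0.
Proof. unfold dist2. replace (_ + _) with 0 by ring. apply sqrt_0. Qed.

Lemma dist2_nonneg p q : 0 <= dist2 p q.
Proof. apply sqrt_pos. Qed.

Lemma infinite_type_nat : infinite_type nat.
Proof.
  intros l. exists (S (list_max l)). intros Hin.
  pose proof (proj1 (list_max_le l (list_max l)) (Nat.le_refl _)) as Hall.
  rewrite Forall_forall in Hall. specialize (Hall _ Hin). lia.
Qed.

Lemma discrete_metric_nat : is_metric (fun a b : nat => if Nat.eq_dec a b then 0 else 1).
Proof.
  split; [|split; [|split]].
  - intros a b. destruct (Nat.eq_dec a b); lra.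
  - intros a b. destruct (Nat.eq_dec a b); split; intros; congruence || lra.
  - intros a b. destruct (Nat.eq_dec a b), (Nat.eq_dec b a); congruence || lra.
  - intros a b c. destruct (Nat.eq_dec a c), (Nat.eq_dec a b), (Nat.eq_dec b c);
      subst; congruence || lra.
Qed.

Lemma distinct_triple_by_order (G : nat -> nat -> nat -> Prop) :
  (forall x y z, G x y z -> G z y x) ->
  (forall i j k, (i < j)%nat -> (j < k)%nat -> G j i k /\ G i j k /\ G i k j) ->
  forall x y z, x <> y -> y <> z -> x <> z -> G x y z.
Proof.
  intros Hsym H x y z Hxy Hyz Hxz.
  destruct (Nat.lt_total x y) as [Hxy' | [-> | Hxy']]; [| congruence |];
  destruct (Nat.lt_total y z) as [Hyz' | [-> | Hyz']]; try congruence;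
  destruct (Nat.lt_total x z) as [Hxz' | [-> | Hxz']]; try congruence; try lia.
  - apply (H x y z); auto.
  - apply (H x z y); auto.
  - apply Hsym, (H z x y); auto.
  - apply (H y x z); auto.
  - apply Hsym, (H y z x); auto.
  - apply Hsym, (H z y x); auto.
Qed.

(* The triangle inequality at [x y z] for the pullback [h^-1 o dist2], made strict so that
   it survives inverting the merely nondecreasing [h]. *)
Definition h_triangle (h : R -> R) (x y z : R * R) : Prop :=
  forall A B, 0 <= A -> 0 <= B -> h A = dist2 x y -> h B = dist2 y z -> dist2 x z < h (A + B).

Lemma h_triangle_sym h x y z : h_triangle h x y z -> h_triangle h z y x.
Proof.
  intros Htri A B HA HB HhA HhB. rewrite dist2_sym, Rplus_comm.
  apply Htri; [exact HB | exact HA | rewrite dist2_sym; exact HhB | rewrite dist2_sym; exact HhA].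
Qed.

Definition pulls_back_to_metric (h : R -> R) (p : nat -> R * R) : Prop :=
  (forall a b, a <> b -> 0 < dist2 (p a) (p b)) /\
  (forall a b, a <> b -> exists t, 0 <= t /\ h t = dist2 (p a) (p b)) /\
  (forall x y z, x <> y -> y <> z -> x <> z -> h_triangle h (p x) (p y) (p z)).

Lemma metric_of_pullback (h : R -> R) (p : nat -> R * R) :
  h 0 = 0 -> nondecreasing_on_nonneg h -> pulls_back_to_metric h p ->
  exists (X : Type) (d : X -> X -> R),
    is_metric d /\ infinite_type X /\
    exists f : X -> R * R, forall x y, dist2 (f x) (f y) = h (d x y).
Proof.
  intros H0 Hmono [Hsep [Hrange Htri]].
  set (hinv := fun s => epsilon (inhabits 0) (fun t => 0 <= t /\ h t = s)).
  (* [h] may vanish near [0], so [hinv 0] need not be [0] *)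
  set (d := fun a b : nat => if Nat.eq_dec a b then 0 else hinv (dist2 (p a) (p b))).
  assert (Hd : forall a b, 0 <= d a b /\ h (d a b) = dist2 (p a) (p b)).
  { intros a b. unfold d. destruct (Nat.eq_dec a b) as [-> | Hab].
    - rewrite dist2_refl, H0. split; lra.
    - apply epsilon_spec, Hrange, Hab. }
  assert (Hrefl : forall a, d a a = 0).
  { intros a. unfold d. destruct (Nat.eq_dec a a); congruence. }
  assert (Hsym : forall a b, d a b = d b a).
  { intros a b. unfold d.
    destruct (Nat.eq_dec a b), (Nat.eq_dec b a); subst; try congruence.
    rewrite dist2_sym. reflexivity. }
  exists nat, d. split; [|split; [exact infinite_type_nat|]].
  - split; [|split; [|split]].
    + intros a b. apply Hd.
    + intros a b. split; [|intros ->; apply Hrefl].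
      intros Hz. destruct (Nat.eq_dec a b) as [|Hab]; [assumption|].
      pose proof (Hsep a b Hab). destruct (Hd a b) as [_ Hh].
      rewrite Hz, H0 in Hh. lra.
    + exact Hsym.
    + intros x y z.
      destruct (Nat.eq_dec x y) as [-> | Hxy]; [rewrite Hrefl; lra|].
      destruct (Nat.eq_dec y z) as [-> | Hyz]; [rewrite Hrefl; lra|].
      destruct (Nat.eq_dec x z) as [-> | Hxz].
      { rewrite Hrefl. pose proof (Hd z y). pose proof (Hd y z). lra. }
      destruct (Hd x y) as [A0 HA], (Hd y z) as [B0 HB], (Hd x z) as [_ HC].
      pose proof (Htri x y z Hxy Hyz Hxz _ _ A0 B0 HA HB) as Hlt.
      apply Rnot_lt_le. intros Hgt.
      pose proof (Hmono (d x y + d y z) (d x z) ltac:(lra)). lra.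
  - exists p. intros x y. symmetry. apply Hd.
Qed.

(* By the law of cosines, the angle of the triangle [x y z] at [y] has cosine
   greater than [-(1 - 2 eps)]. *)
Definition angle_bounded (eps : R) (x y z : R * R) : Prop :=
  dist2 x z ^ 2 < dist2 x y ^ 2 + dist2 z y ^ 2 + 2 * (1 - 2 * eps) * dist2 x y * dist2 z y.

Lemma angle_bounded_sym eps x y z : angle_bounded eps x y z -> angle_bounded eps z y x.
Proof. unfold angle_bounded. rewrite (dist2_sym z x). lra. Qed.

Lemma dist2_lt_of_angle_bounded eps x y z : 0 <= eps <= 1 -> dist2 x y <= dist2 z y ->
  angle_bounded eps x y z -> dist2 x z < dist2 z y + (1 - eps) * dist2 x y.
Proof.
  unfold angle_bounded. intros Heps Hab Hangle.
  pose proof (dist2_nonneg x y). pose proof (dist2_nonneg x z).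
  set (a := dist2 x y) in *. set (b := dist2 z y) in *. set (c := dist2 x z) in *.
  assert (0 <= eps * a * (b - a)) by (repeat apply Rmult_le_pos; lra).
  assert (Hsq : c ^ 2 < (b + (1 - eps) * a) ^ 2) by nra.
  assert (0 <= b + (1 - eps) * a) by nra.
  nra.
Qed.

Lemma h_triangle_of_angle_bounded (h : R -> R) eps (S : R -> Prop) x y z :
  nondecreasing_on_nonneg h -> 0 < eps <= 1 / 2 -> almost_superadditive h eps S ->
  angle_bounded eps x y z -> S (dist2 x y) -> S (dist2 y z) -> h_triangle h x y z.
Proof.
  intros Hmono Heps Hsup Hangle Sxy Syz.
  rewrite dist2_sym in Syz.
  assert (Hkey : forall x z A B, angle_bounded eps x y z -> S (dist2 x y) -> S (dist2 z y) ->
            0 <= A <= B -> h A = dist2 x y -> h B = dist2 z y -> dist2 x z < h (A + B)).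
  { clear x z Hangle Sxy Syz. intros x z A B Hangle Sxy Szy HAB HA HB.
    rewrite <- HA in Sxy. rewrite <- HB in Szy.
    pose proof (Hsup A B ltac:(lra) ltac:(lra) Sxy Szy) as Hadd.
    pose proof (Hmono A B HAB) as Hle.
    rewrite HA, HB in Hadd, Hle.
    pose proof (dist2_lt_of_angle_bounded eps x y z ltac:(lra) Hle Hangle).
    lra. }
  intros A B HA HB HhA HhB.
  rewrite dist2_sym in HhB.
  destruct (Rle_lt_dec A B).
  - apply Hkey; auto; lra.
  - rewrite dist2_sym, Rplus_comm.
    apply Hkey; auto using angle_bounded_sym; lra.
Qed.

(* [dir s] is the unit vector at angle [2 atan s], and [dir_cos s t] the cosine of the
   angle between [dir s] and [dir t]. *)
Definition dir (s : R) : R * R := ((1 - s ^ 2) / (1 + s ^ 2), 2 * s / (1 + s ^ 2)).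

Definition dir_cos (s t : R) : R := 1 - 2 * (s - t) ^ 2 / ((1 + s ^ 2) * (1 + t ^ 2)).

Lemma dist2_scaled_dir_sq r1 r2 s t :
  dist2 (r1 * fst (dir s), r1 * snd (dir s)) (r2 * fst (dir t), r2 * snd (dir t)) ^ 2
  = r1 ^ 2 + r2 ^ 2 - 2 * r1 * r2 * dir_cos s t.
Proof.
  unfold dist2, dir, dir_cos. cbn [fst snd].
  rewrite pow2_sqrt by (apply Rplus_le_le_0_compat; apply pow2_ge_0).
  field. split; nra.
Qed.

Lemma dir_cos_sym s t : dir_cos s t = dir_cos t s.
Proof. unfold dir_cos. f_equal. f_equal; ring. Qed.

Lemma dir_cos_bounds s t : 0 < s <= 1 / 2 -> 0 < t <= 1 / 2 ->
  1 / 2 <= dir_cos s t <= 1 - (s - t) ^ 2.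
Proof.
  intros Hs Ht. unfold dir_cos.
  set (D := (1 + s ^ 2) * (1 + t ^ 2)).
  assert (0 <= s ^ 2 <= 1 / 4) by (split; nra).
  assert (0 <= t ^ 2 <= 1 / 4) by (split; nra).
  assert (HD : 1 <= D <= 2) by (unfold D; split; nra).
  set (q := 2 * (s - t) ^ 2 / D).
  assert (Hq : q * D = 2 * (s - t) ^ 2) by (unfold q; field; lra).
  pose proof (pow2_ge_0 (s - t)).
  assert (Hq0 : 0 <= q)
    by (unfold q; apply Rmult_le_pos; [lra | apply Rlt_le, Rinv_0_lt_compat; lra]).
  assert ((s - t) ^ 2 <= 1 / 4) by nra.
  split; nra.
Qed.

Definition ray_tan (n : nat) : R := / (INR n + 2).

Definition spacing (n : nat) : R := / (8 * (INR n + 3) ^ 4).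

Definition ray_point (r : nat -> R) (n : nat) : R * R :=
  (r n * fst (dir (ray_tan n)), r n * snd (dir (ray_tan n))).

Definition ray_cos (a b : nat) : R := dir_cos (ray_tan a) (ray_tan b).

Lemma ray_tan_bounds n : 0 < ray_tan n <= 1 / 2.
Proof.
  unfold ray_tan. pose proof (pos_INR n). split.
  - apply Rinv_0_lt_compat. lra.
  - replace (1 / 2) with (/ 2) by field. apply Rinv_le_contravar; lra.
Qed.

Lemma ray_tan_gap a b : (a < b)%nat -> / (INR a + 3) ^ 2 <= ray_tan a - ray_tan b.
Proof.
  intros Hab. unfold ray_tan. pose proof (pos_INR a).
  assert (INR a + 1 <= INR b) by (rewrite <- S_INR; apply le_INR; lia).
  assert (/ (INR b + 2) <= / (INR a + 3)) by (apply Rinv_le_contravar; lra).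
  assert (/ (INR a + 2) - / (INR a + 3) = / ((INR a + 2) * (INR a + 3))) by (field; lra).
  assert (/ (INR a + 3) ^ 2 <= / ((INR a + 2) * (INR a + 3))) by (apply Rinv_le_contravar; nra).
  lra.
Qed.

Lemma spacing_bounds n : 0 < spacing n <= 1 / 8.
Proof.
  unfold spacing. pose proof (pos_INR n).
  assert (1 <= (INR n + 3) ^ 4) by (rewrite <- (pow1 4); apply pow_incr; lra).
  split.
  - apply Rinv_0_lt_compat. lra.
  - replace (1 / 8) with (/ 8) by field. apply Rinv_le_contravar; lra.
Qed.

Lemma spacing_antitone m n : (m <= n)%nat -> spacing n <= spacing m.
Proof.
  intros Hmn. unfold spacing. pose proof (pos_INR m). pose proof (le_INR m n Hmn).
  apply Rinv_le_contravar.
  - pose proof (pow_lt (INR m + 3) 4 ltac:(lra)). lra.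
  - apply Rmult_le_compat_l; [lra|]. apply pow_incr. lra.
Qed.

Lemma ray_cos_sym a b : ray_cos a b = ray_cos b a.
Proof. apply dir_cos_sym. Qed.

Lemma ray_cos_bounds a b : 1 / 2 <= ray_cos a b <= 1.
Proof.
  pose proof (dir_cos_bounds _ _ (ray_tan_bounds a) (ray_tan_bounds b)).
  unfold ray_cos. pose proof (pow2_ge_0 (ray_tan a - ray_tan b)). lra.
Qed.

Lemma ray_cos_lt a b : (a < b)%nat -> ray_cos a b <= 1 - 8 * spacing a.
Proof.
  intros Hab. unfold ray_cos.
  pose proof (dir_cos_bounds _ _ (ray_tan_bounds a) (ray_tan_bounds b)) as [_ Hcos].
  pose proof (ray_tan_gap a b Hab) as Hgap.
  assert (Hg : 0 <= / (INR a + 3) ^ 2)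
    by (apply Rlt_le, Rinv_0_lt_compat, pow_lt; pose proof (pos_INR a); lra).
  assert (8 * spacing a = (/ (INR a + 3) ^ 2) ^ 2)
    by (unfold spacing; field; pose proof (pos_INR a); lra).
  nra.
Qed.

Section Rays.

Variable r : nat -> R.
Hypothesis r_pos : forall n, 0 < r n.

Local Notation p := (ray_point r).

Lemma ray_dist_sq a b :
  dist2 (p a) (p b) ^ 2 = r a ^ 2 + r b ^ 2 - 2 * r a * r b * ray_cos a b.
Proof. apply dist2_scaled_dir_sq. Qed.

Lemma ray_cross_bounds a b : r a * r b / 2 <= r a * r b * ray_cos a b <= r a * r b.
Proof.
  pose proof (ray_cos_bounds a b).
  assert (0 < r a * r b) by (apply Rmult_lt_0_compat; apply r_pos).
  split; nra.
Qed.

Lemma ray_dist_ge a b : r a - r b <= dist2 (p a) (p b).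
Proof.
  pose proof (ray_dist_sq a b). pose proof (ray_cross_bounds a b).
  pose proof (dist2_nonneg (p a) (p b)). nra.
Qed.

Lemma ray_dist_le a b : dist2 (p a) (p b) <= r a + r b.
Proof.
  pose proof (ray_dist_sq a b). pose proof (ray_cross_bounds a b).
  pose proof (dist2_nonneg (p a) (p b)). pose proof (r_pos a). pose proof (r_pos b). nra.
Qed.

Lemma angle_bounded_at_innermost eps P Q S : 0 <= eps <= 1 / 2 ->
  r P <= r Q / 8 -> r Q <= r S -> angle_bounded eps (p Q) (p P) (p S).
Proof.
  intros Heps HPQ HQS. unfold angle_bounded. rewrite !ray_dist_sq.
  pose proof (r_pos P). pose proof (r_pos Q). pose proof (r_pos S).
  pose proof (ray_cross_bounds Q S). pose proof (ray_cross_bounds Q P).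
  pose proof (ray_cross_bounds S P).
  pose proof (dist2_nonneg (p Q) (p P)). pose proof (dist2_nonneg (p S) (p P)).
  assert (0 <= 2 * (1 - 2 * eps) * dist2 (p Q) (p P) * dist2 (p S) (p P))
    by (repeat apply Rmult_le_pos; lra).
  assert (r Q * r P <= r Q * r S / 8) by nra.
  assert (r S * r P <= r Q * r S / 8) by nra.
  nra.
Qed.

Lemma angle_bounded_at_outermost eps P Q S : 0 <= eps <= 1 / 2 ->
  r P <= r S / 8 -> r Q <= r S / 8 -> angle_bounded eps (p P) (p S) (p Q).
Proof.
  intros Heps HPS HQS. unfold angle_bounded. rewrite !ray_dist_sq.
  pose proof (r_pos P). pose proof (r_pos Q). pose proof (r_pos S).
  pose proof (ray_cross_bounds P Q). pose proof (ray_cross_bounds P S).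
  pose proof (ray_cross_bounds Q S).
  pose proof (dist2_nonneg (p P) (p S)). pose proof (dist2_nonneg (p Q) (p S)).
  assert (0 <= 2 * (1 - 2 * eps) * dist2 (p P) (p S) * dist2 (p Q) (p S))
    by (repeat apply Rmult_le_pos; lra).
  assert (r P * r S <= r S * r S / 8) by nra.
  assert (r Q * r S <= r S * r S / 8) by nra.
  nra.
Qed.

Lemma angle_bounded_at_middle delta P Q S : 0 < delta <= 1 / 8 ->
  r P <= delta * r Q -> r Q <= delta * r S -> ray_cos Q S <= 1 - 8 * delta ->
  angle_bounded delta (p P) (p Q) (p S).
Proof.
  intros Hdelta HPQ HQS Hcos. unfold angle_bounded. rewrite !ray_dist_sq, (ray_cos_sym S Q).
  pose proof (r_pos P). pose proof (r_pos Q). pose proof (r_pos S).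
  assert (HQS0 : 0 < r Q * r S) by (apply Rmult_lt_0_compat; lra).
  pose proof (ray_cross_bounds P Q). pose proof (ray_cross_bounds P S).
  pose proof (ray_dist_ge Q P) as HdPQ. pose proof (ray_dist_ge S Q) as HdSQ.
  rewrite dist2_sym in HdPQ.
  set (a := dist2 (p P) (p Q)) in *. set (b := dist2 (p S) (p Q)) in *.
  (* [N] is minus the inner product of [p P - p Q] and [p S - p Q] *)
  set (N := r P * r Q * ray_cos P Q + r Q * r S * ray_cos Q S - r Q ^ 2
            - r P * r S * ray_cos P S).
  assert (HN : N <= (delta ^ 2 + 1 - 8 * delta) * (r Q * r S)).
  { assert (r P * r Q <= delta ^ 2 * (r Q * r S)).
    { assert (r P * r Q <= delta * r Q * r Q) by nra.
      assert (r Q * r Q <= delta * r Q * r S) by nra.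
      nra. }
    assert (r Q * r S * ray_cos Q S <= r Q * r S * (1 - 8 * delta))
      by (apply Rmult_le_compat_l; lra).
    unfold N. nra. }
  assert (Hab : (1 - delta) ^ 2 * (r Q * r S) <= a * b).
  { replace ((1 - delta) ^ 2 * (r Q * r S)) with ((1 - delta) * r Q * ((1 - delta) * r S))
      by ring.
    apply Rmult_le_compat; nra. }
  assert (Hpoly : delta ^ 2 + 1 - 8 * delta < (1 - 2 * delta) * (1 - delta) ^ 2) by nra.
  assert ((delta ^ 2 + 1 - 8 * delta) * (r Q * r S)
          < (1 - 2 * delta) * ((1 - delta) ^ 2 * (r Q * r S))) by nra.
  assert ((1 - 2 * delta) * ((1 - delta) ^ 2 * (r Q * r S)) <= (1 - 2 * delta) * (a * b))
    by (apply Rmult_le_compat_l; lra).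
  unfold N in HN. nra.
Qed.

End Rays.

Fixpoint spread_up (d b : nat -> R) (n : nat) : R :=
  match n with
  | O => b O
  | S m => Rmax (spread_up d b m / d (S m)) (b (S m))
  end.

Fixpoint spread_down (d b : nat -> R) (n : nat) : R :=
  match n with
  | O => b O
  | S m => Rmin (d (S m) * spread_down d b m) (b (S m))
  end.

Section Spread.

Variables d b : nat -> R.
Hypothesis d_bounds : forall n, 0 < d n <= 1.
Hypothesis b_pos : forall n, 0 < b n.

Lemma spread_up_ge n : b n <= spread_up d b n.
Proof. destruct n; simpl; [lra | apply Rmax_r]. Qed.

Lemma spread_up_step n : spread_up d b n <= d (S n) * spread_up d b (S n).
Proof.
  simpl. pose proof (d_bounds (S n)).
  pose proof (Rmax_l (spread_up d b n / d (S n)) (b (S n))).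
  replace (spread_up d b n) with (d (S n) * (spread_up d b n / d (S n))) at 1 by (field; lra).
  apply Rmult_le_compat_l; lra.
Qed.

Lemma spread_up_le i j : (i <= j)%nat -> spread_up d b i <= spread_up d b j.
Proof.
  induction 1; [lra|].
  pose proof (spread_up_step m). pose proof (d_bounds (S m)).
  pose proof (b_pos (S m)). pose proof (spread_up_ge (S m)). nra.
Qed.

Lemma spread_up_sep i j : (i < j)%nat -> spread_up d b i <= d j * spread_up d b j.
Proof.
  intros Hij. destruct j as [|j]; [lia|].
  pose proof (spread_up_le i j ltac:(lia)). pose proof (spread_up_step j). lra.
Qed.

Lemma spread_down_le n : spread_down d b n <= b n.
Proof. destruct n; simpl; [lra | apply Rmin_r]. Qed.

Lemma spread_down_pos n : 0 < spread_down d b n.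
Proof.
  induction n; simpl; [apply b_pos|].
  pose proof (d_bounds (S n)). pose proof (b_pos (S n)).
  apply Rmin_glb_lt; [apply Rmult_lt_0_compat|]; lra.
Qed.

Lemma spread_down_step n : spread_down d b (S n) <= d (S n) * spread_down d b n.
Proof. apply Rmin_l. Qed.

Lemma spread_down_ge i j : (i <= j)%nat -> spread_down d b j <= spread_down d b i.
Proof.
  induction 1; [lra|].
  pose proof (spread_down_step m). pose proof (d_bounds (S m)).
  pose proof (spread_down_pos m). nra.
Qed.

Lemma spread_down_sep i j : (i < j)%nat -> spread_down d b j <= d j * spread_down d b i.
Proof.
  intros Hij. destruct j as [|j]; [lia|].
  pose proof (spread_down_ge i j ltac:(lia)). pose proof (spread_down_step j).
  pose proof (d_bounds (S j)). nra.
Qed.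

End Spread.

Lemma rays_h_triangle_growing h r (S : nat -> R -> Prop) :
  nondecreasing_on_nonneg h -> (forall n, 0 < r n) ->
  (forall i j, (i < j)%nat -> r i <= spacing j * r j) ->
  (forall n, almost_superadditive h (spacing n) (S n)) ->
  (forall a b c, a <> b -> (c <= a)%nat \/ (c <= b)%nat ->
     S c (dist2 (ray_point r a) (ray_point r b))) ->
  forall x y z, x <> y -> y <> z -> x <> z ->
    h_triangle h (ray_point r x) (ray_point r y) (ray_point r z).
Proof.
  intros Hmono r_pos r_sep Hsup Hscale.
  apply (distinct_triple_by_order
           (fun x y z => h_triangle h (ray_point r x) (ray_point r y) (ray_point r z))).
  { intros x y z. apply h_triangle_sym. }
  intros i j k Hij Hjk.
  pose proof (spacing_bounds j) as Hsp.
  pose proof (r_pos i). pose proof (r_pos j). pose proof (r_pos k).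
  assert (Hij' : r i <= spacing j * r j) by (apply r_sep; lia).
  assert (Hjk' : r j <= spacing j * r k).
  { pose proof (r_sep j k Hjk). pose proof (spacing_antitone j k ltac:(lia)). nra. }
  assert (Hij8 : r i <= r j / 8) by nra.
  assert (Hjk8 : r j <= r k / 8) by nra.
  split; [|split]; apply (h_triangle_of_angle_bounded h (spacing j) (S j));
    auto; try lra; try (apply Hscale; lia).
  - apply angle_bounded_at_innermost; try exact r_pos; try split; lra.
  - apply angle_bounded_at_middle; auto. apply ray_cos_lt. lia.
  - apply angle_bounded_at_outermost; try exact r_pos; try split; lra.
Qed.

Lemma rays_h_triangle_shrinking h r (S : nat -> R -> Prop) :
  nondecreasing_on_nonneg h -> (forall n, 0 < r n) ->
  (forall i j, (i < j)%nat -> r j <= spacing j * r i) ->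
  (forall n, almost_superadditive h (spacing n) (S n)) ->
  (forall a b c, (c <= a)%nat -> (c <= b)%nat ->
     S c (dist2 (ray_point r a) (ray_point r b))) ->
  forall x y z, x <> y -> y <> z -> x <> z ->
    h_triangle h (ray_point r x) (ray_point r y) (ray_point r z).
Proof.
  intros Hmono r_pos r_sep Hsup Hscale.
  apply (distinct_triple_by_order
           (fun x y z => h_triangle h (ray_point r x) (ray_point r y) (ray_point r z))).
  { intros x y z. apply h_triangle_sym. }
  intros i j k Hij Hjk.
  pose proof (spacing_bounds i) as Hsp.
  pose proof (r_pos i). pose proof (r_pos j). pose proof (r_pos k).
  assert (Hji : r j <= spacing i * r i).
  { pose proof (r_sep i j Hij). pose proof (spacing_antitone i j ltac:(lia)). nra. }
  assert (Hkj : r k <= spacing i * r j).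
  { pose proof (r_sep j k Hjk). pose proof (spacing_antitone i k ltac:(lia)). nra. }
  assert (Hji8 : r j <= r i / 8) by nra.
  assert (Hkj8 : r k <= r j / 8) by nra.
  split; [|split]; apply (h_triangle_of_angle_bounded h (spacing i) (S i));
    auto; try lra; try (apply Hscale; lia).
  - apply angle_bounded_at_outermost; try exact r_pos; try split; lra.
  - apply angle_bounded_sym, angle_bounded_at_middle; auto.
    rewrite ray_cos_sym. apply ray_cos_lt. lia.
  - apply angle_bounded_sym, angle_bounded_at_innermost; try exact r_pos; try split; lra.
Qed.

Lemma pullback_near_infty h : maps_nonneg h -> h 0 = 0 -> concave_on_nonneg h ->
  ~ ratio_to_0_at_infty h -> exists p, pulls_back_to_metric h p.
Proof.
  intros Hnn H0 Hconc Hnot.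
  pose proof (concave_nondecreasing h Hnn Hconc) as Hmono.
  assert (Hsp : forall n, 0 < spacing n <= 1) by (intros n; pose proof (spacing_bounds n); lra).
  destruct (choice (fun n alpha => h 1 <= alpha /\
                      almost_superadditive h (spacing n) (fun s => alpha < s)))
    as [alpha Halpha].
  { intros n. apply almost_superadditive_near_infty; auto. pose proof (spacing_bounds n). lra. }
  assert (Halpha0 : forall n, 0 <= alpha n).
  { intros n. pose proof (Hnn 1 ltac:(lra)). destruct (Halpha n). lra. }
  set (base := fun n => 2 * alpha n + 1).
  set (r := spread_up spacing base).
  assert (Hb : forall n, 0 < base n) by (intros n; unfold base; pose proof (Halpha0 n); lra).
  assert (r_ge : forall n, 2 * alpha n + 1 <= r n)
    by (intros n; exact (spread_up_ge spacing base n)).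
  assert (r_pos : forall n, 0 < r n)
    by (intros n; pose proof (r_ge n); pose proof (Halpha0 n); lra).
  assert (r_sep : forall i j, (i < j)%nat -> r i <= spacing j * r j)
    by (intros; apply (spread_up_sep spacing base); auto).
  assert (r_le : forall i j, (i <= j)%nat -> r i <= r j)
    by (intros; apply (spread_up_le spacing base); auto).
  assert (Hfar : forall a b c, (a < b)%nat -> (c <= b)%nat ->
            alpha c < dist2 (ray_point r a) (ray_point r b)).
  { intros a b c Hab Hcb.
    pose proof (r_sep a b Hab). pose proof (spacing_bounds b). pose proof (r_pos b).
    pose proof (ray_dist_ge r r_pos b a) as Hd. rewrite dist2_sym in Hd.
    pose proof (r_le c b Hcb). pose proof (r_ge c). pose proof (Halpha0 c). nra. }
  assert (Hscale : forall a b c, a <> b -> (c <= a)%nat \/ (c <= b)%nat ->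
            alpha c < dist2 (ray_point r a) (ray_point r b)).
  { intros a b c Hab Hc.
    destruct (Nat.lt_total a b) as [Hlt | [-> | Hlt]]; [| congruence |].
    - destruct Hc; apply Hfar; lia.
    - rewrite dist2_sym. destruct Hc; apply Hfar; lia. }
  exists (ray_point r). split; [|split].
  - intros a b Hab. pose proof (Hscale a b a Hab (or_introl (Nat.le_refl a))).
    pose proof (Halpha0 a). lra.
  - intros a b Hab. apply (range_near_infty h Hnn H0 Hconc Hnot).
    pose proof (Hscale a b a Hab (or_introl (Nat.le_refl a))). destruct (Halpha a). lra.
  - apply (rays_h_triangle_growing h r (fun n s => alpha n < s)); auto.
    intros n. apply Halpha.
Qed.

Lemma pullback_near_0 h : maps_nonneg h -> h 0 = 0 -> concave_on_nonneg h ->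
  ~ ratio_to_infty_at_0 h -> 0 < h 1 -> exists p, pulls_back_to_metric h p.
Proof.
  intros Hnn H0 Hconc Hnot H1.
  pose proof (concave_nondecreasing h Hnn Hconc) as Hmono.
  assert (Hsp : forall n, 0 < spacing n <= 1) by (intros n; pose proof (spacing_bounds n); lra).
  destruct (choice (fun n beta => 0 < beta <= h 1 /\
                      almost_superadditive h (spacing n) (fun s => s < beta))) as [beta Hbeta].
  { intros n. apply almost_superadditive_near_0; auto. pose proof (spacing_bounds n). lra. }
  set (base := fun n => beta n / 4).
  set (r := spread_down spacing base).
  assert (Hb : forall n, 0 < base n) by (intros n; unfold base; destruct (Hbeta n); lra).
  assert (r_le_beta : forall n, r n <= beta n / 4)
    by (intros n; exact (spread_down_le spacing base n)).
  assert (r_pos : forall n, 0 < r n) by (intros; apply (spread_down_pos spacing base); auto).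
  assert (r_sep : forall i j, (i < j)%nat -> r j <= spacing j * r i)
    by (intros; apply (spread_down_sep spacing base); auto).
  assert (r_ge : forall i j, (i <= j)%nat -> r j <= r i)
    by (intros; apply (spread_down_ge spacing base); auto).
  assert (Hscale : forall a b c, (c <= a)%nat -> (c <= b)%nat ->
            dist2 (ray_point r a) (ray_point r b) < beta c).
  { intros a b c Hca Hcb.
    pose proof (ray_dist_le r r_pos a b). pose proof (r_ge c a Hca). pose proof (r_ge c b Hcb).
    pose proof (r_le_beta c). destruct (Hbeta c) as [[Hbc _] _]. lra. }
  assert (Hsep : forall a b, a <> b -> 0 < dist2 (ray_point r a) (ray_point r b)).
  { assert (Hlt : forall a b, (a < b)%nat -> 0 < dist2 (ray_point r a) (ray_point r b)).
    { intros a b Hab. pose proof (r_sep a b Hab). pose proof (spacing_bounds b).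
      pose proof (r_pos a). pose proof (ray_dist_ge r r_pos a b). nra. }
    intros a b Hab. destruct (Nat.lt_total a b) as [Hab' | [-> | Hab']]; [| congruence |].
    - apply Hlt, Hab'.
    - rewrite dist2_sym. apply Hlt, Hab'. }
  exists (ray_point r). split; [exact Hsep | split].
  - intros a b Hab. apply (range_near_0 h Hnn H0 Hconc Hnot H1). split; [apply Hsep, Hab|].
    destruct (Nat.le_ge_cases a b) as [Hle | Hge].
    + pose proof (Hscale a b a (Nat.le_refl a) Hle). destruct (Hbeta a). lra.
    + pose proof (Hscale a b b Hge (Nat.le_refl b)). destruct (Hbeta b). lra.
  - apply (rays_h_triangle_shrinking h r (fun n s => s < beta n)); auto.
    intros n. apply Hbeta.
Qed.

Theorem proposition3p4 (h : R -> R)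
  (h_nonneg : maps_nonneg h) (h0 : h 0 = 0) (hconc : concave_on_nonneg h)
  (hcond : ~ ratio_to_infty_at_0 h \/ ~ ratio_to_0_at_infty h) :
  exists (X : Type) (d : X -> X -> R),
    is_metric d /\ infinite_type X /\
    exists f : X -> R * R, forall x y, dist2 (f x) (f y) = h (d x y).
Proof.
  pose proof (concave_nondecreasing h h_nonneg hconc) as h_mono.
  destruct (Req_dec (h 1) 0) as [H1 | H1].
  - (* the unit-distance space on [nat] collapses onto a single point *)
    exists nat, (fun a b => if Nat.eq_dec a b then 0 else 1).
    split; [exact discrete_metric_nat | split; [exact infinite_type_nat|]].
    exists (fun _ => (0, 0)). intros x y. rewrite dist2_refl.
    destruct (Nat.eq_dec x y); congruence.
  - assert (H1pos : 0 < h 1) by (pose proof (h_nonneg 1 ltac:(lra)); lra).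
    destruct hcond as [Hnot | Hnot].
    + destruct (pullback_near_0 h h_nonneg h0 hconc Hnot H1pos) as [p Hp].
      exact (metric_of_pullback h p h0 h_mono Hp).
    + destruct (pullback_near_infty h h_nonneg h0 hconc Hnot) as [p Hp].
      exact (metric_of_pullback h p h0 h_mono Hp).
Qed.
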